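(* For every NFA $\mathcal A$, the relation $P(\sqsubset^{\mathrm{bw}},\subseteq^{\mathrm{fw}})$ is good for pruning on NFA: $\mathcal L(\mathrm{Prune}(\mathcal A,P(\sqsubset^{\mathrm{bw}},\subseteq^{\mathrm{fw}})))=\mathcal L(\mathcal A)$.
   Context: An NFA is $\mathcal A=(\Sigma,Q,I,F,\delta)$, $\delta\subseteq Q\times\Sigma\times Q$, assumed forward and backward complete (every state has, for every symbol, an incoming and an outgoing transition with that symbol); its language is the set of finite words having a finite trace starting in $I$ and ending in $F$. Backward finite-word simulation $\sqsubseteq^{\mathrm{bw}}$: in the game from $(p_0,q_0)$, at round $i$ from $(p_i,q_i)$ Spoiler picks $p_{i+1}\xrightarrow{\sigma_i}p_i$ and Duplicator answers $q_{i+1}\xrightarrow{\sigma_i}q_i$; Duplicator wins the infinite play if $p_i\in I\Rightarrow q_i\in I$ for all $i$; $p\sqsubseteq^{\mathrm{bw}}q$ iff she has a winning strategy; $\sqsubset^{\mathrm{bw}}$ is its strict part. Forward finite trace inclusion: $p\subseteq^{\mathrm{fw}}q$ iff for every finite word $w$, if some $w$-trace from $p$ ends in $F$ then some $w$-trace from $q$ ends in $F$. $\mathrm{Prune}(\mathcal A,P)$ has transition set $\{t\in\delta:\nexists t'\in\delta,(t,t')\in P\}$; $P(R_b,R_f)=\{((p,\sigma,r),(p',\sigma,r'))\in\delta\times\delta:p\,R_b\,p',\ r\,R_f\,r'\}$. *)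

From mathcomp Require Import all_boot.
Set Implicit Arguments. Unset Strict Implicit. Unset Printing Implicit Defensive.

Record NFA (Sigma Q : finType) := mkNFA {
  init  : Q -> Prop;
  final : Q -> Prop;
  trans : Q -> Sigma -> Q -> Prop
}.

Definition fw_complete (Sigma Q : finType) (A : NFA Sigma Q) : Prop :=
  forall (p : Q) (a : Sigma), exists r, trans A p a r.
Definition bw_complete (Sigma Q : finType) (A : NFA Sigma Q) : Prop :=
  forall (p : Q) (a : Sigma), exists r, trans A r a p.

Fixpoint accepts_from (Sigma Q : finType) (A : NFA Sigma Q) (p : Q) (w : seq Sigma)
  : Prop :=
  match w with
  | [::] => final A p
  | a :: w' => exists r, trans A p a r /\ accepts_from A r w'
  end.

Definition lang (Sigma Q : finType) (A : NFA Sigma Q) (w : seq Sigma) : Prop :=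
  exists p, init A p /\ accepts_from A p w.

(* A Duplicator strategy maps
   the history of Spoiler's moves [(sigma_0,p_1);...;(sigma_i,p_{i+1})] to her
   answer q_{i+1}.  Spoiler plays an infinite backward path p_0 <-sigma_0- p_1 <- ...;
   Duplicator wins if all her moves are legal transitions and p_i \in I -> q_i \in I
   for all i. *)
Definition dup_positions (Sigma Q : finType) (q0 : Q) (str : seq (Sigma * Q) -> Q)
  (sg : nat -> Sigma) (ps : nat -> Q) (i : nat) : Q :=
  match i with
  | 0 => q0
  | k.+1 => str (mkseq (fun j => (sg j, ps j.+1)) k.+1)
  end.

Definition bw_sim (Sigma Q : finType) (A : NFA Sigma Q) (p0 q0 : Q) : Prop :=
  exists str : seq (Sigma * Q) -> Q,
    forall (sg : nat -> Sigma) (ps : nat -> Q),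
      ps 0 = p0 ->
      (forall i, trans A (ps i.+1) (sg i) (ps i)) ->
      forall i,
        trans A (dup_positions q0 str sg ps i.+1) (sg i) (dup_positions q0 str sg ps i)
        /\ (init A (ps i) -> init A (dup_positions q0 str sg ps i)).

Definition bw_sim_strict (Sigma Q : finType) (A : NFA Sigma Q) (p q : Q) : Prop :=
  bw_sim A p q /\ ~ bw_sim A q p.

Definition fw_incl (Sigma Q : finType) (A : NFA Sigma Q) (p q : Q) : Prop :=
  forall w : seq Sigma, accepts_from A p w -> accepts_from A q w.

Definition P_rel (Sigma Q : finType) (A : NFA Sigma Q) (Rb Rf : Q -> Q -> Prop)
  (t t' : Q * Sigma * Q) : Prop :=
  let: (p, a, r) := t in let: (p', a', r') := t' in
  [/\ trans A p a r, trans A p' a' r', a' = a, Rb p p' & Rf r r'].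

Definition prune (Sigma Q : finType) (A : NFA Sigma Q)
  (P : Q * Sigma * Q -> Q * Sigma * Q -> Prop) : NFA Sigma Q :=
  mkNFA (init A) (final A)
    (fun p a r => trans A p a r /\
       ~ (exists t' : Q * Sigma * Q,
            trans A t'.1.1 t'.1.2 t'.2 /\ P (p, a, r) t')).

From mathcomp Require Import all_boot boolp.

Set Implicit Arguments.
Unset Strict Implicit.
Unset Printing Implicit Defensive.

(* Let p in I accept w.  Walking along w, replace the current state by one
   that is maximal for backward simulation among the states reached by the
   prefix already read and accepting the remaining suffix; backward simulation
   preserves reachability.  A transition (q, a, r) out of such a maximal state
   is never pruned: a witness (p', a, r') with q strictly below p' and r' trace
   including r would make p' another such state, strictly above q.  In the
   induction on the suffix the target r is chosen first, by induction, and the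
   source is then pulled back along the simulation, so that the new source
   simulates the old one. *)

Lemma exists_maximal (T : finType) (M : T -> Prop) (R : T -> T -> Prop) x :
  (forall y, R y y) -> (forall y z u, R y z -> R z u -> R y u) -> M x ->
  exists2 y, M y /\ R x y & forall z, M z -> R y z -> R z y.
Proof.
move=> R_refl R_trans Mx.
pose up y := [set z | `[< R y z >]].
pose U y := `[< M y /\ R x y >].
have Ux : U x by apply/asboolP.
case: (arg_minnP (fun y => #|up y|) Ux) => y /asboolP[My Rxy] y_min.
exists y => // z Mz Ryz.
have up_zy : up z \subset up y.
  by apply/subsetP => u; rewrite !inE => /asboolP Rzu; apply/asboolP; apply: R_trans Rzu.
have /eqP up_eq : up z == up y.
  by rewrite eqEcard up_zy y_min //; apply/asboolP; split=> //; apply: R_trans Ryz.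
have : y \in up z by rewrite up_eq inE; apply/asboolP.
by rewrite inE => /asboolP.
Qed.

Lemma mkseqSl (T : Type) (f : nat -> T) n :
  mkseq f n.+1 = f 0 :: mkseq (fun j => f j.+1) n.
Proof. by rewrite /mkseq /= -[1]/(1 + 0) iotaDl -map_comp. Qed.

Section BackwardSimulation.
Variables (Sigma Q : finType) (A : NFA Sigma Q).

Lemma bw_sim_refl p : bw_sim A p p.
Proof.
pose copy (h : seq (Sigma * Q)) := if h is x :: _ then (last x h).2 else p.
have copy_rcons h x : copy (rcons h x) = x.2 by case: h => //= y h; rewrite last_rcons.
exists copy => sg ps ps0 ps_trans i.
have dup_ps j : dup_positions p copy sg ps j = ps j.
  by case: j => [|j] //; rewrite /dup_positions mkseqS copy_rcons.
by rewrite !dup_ps; split=> //; apply: ps_trans.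
Qed.

(* Duplicator's composed strategy replays the first strategy on the prefixes of
   Spoiler's history and feeds the resulting answers to the second one. *)
Lemma bw_sim_trans p q r : bw_sim A p q -> bw_sim A q r -> bw_sim A p r.
Proof.
move=> [s1 s1_wins] [s2 s2_wins].
pose relay (x : Sigma * Q) h := mkseq (fun j => ((nth x h j).1, s1 (take j.+1 h))) (size h).
pose s (h : seq (Sigma * Q)) := if h is x :: _ then s2 (relay x h) else r.
exists s => sg ps ps0 ps_trans.
pose qs := dup_positions q s1 sg ps.
have q_wins := s1_wins sg ps ps0 ps_trans.
have r_wins := s2_wins sg qs erefl (fun i => (q_wins i).1).
have dup_rs i : dup_positions r s sg ps i = dup_positions r s2 sg qs i.
  case: i => [|k] //=; rewrite /relay size_mkseq; congr s2.
  apply: (@eq_from_nth _ (sg 0, ps 1)) => [|j]; rewrite !size_mkseq // => jk.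
  by rewrite !nth_mkseq // /mkseq -map_take take_iota (minn_idPl jk).
move=> i; rewrite !dup_rs; have [r_trans r_init] := r_wins i.
by split=> // /(q_wins i).2.
Qed.

Hypothesis A_bw_complete : bw_complete A.

Lemma exists_bw_path (a : Sigma) x :
  exists sg ps, ps 0 = x /\ forall i, trans A (ps i.+1) (sg i) (ps i).
Proof.
have [pred pred_trans] := choice (fun y => A_bw_complete y a).
by exists (fun _ => a), (fun n => iter n pred x); split=> // i; apply: pred_trans.
Qed.

(* The letter [a] only witnesses that Sigma is inhabited: over an empty
   alphabet Spoiler has no play and [bw_sim] is the full relation. *)
Lemma bw_sim_init (a : Sigma) p q : bw_sim A p q -> init A p -> init A q.
Proof.
move=> [s s_wins] p_init.
have [sg [ps [ps0 ps_trans]]] := exists_bw_path a p.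
by apply: (s_wins sg ps ps0 ps_trans 0).2; rewrite ps0.
Qed.

Lemma bw_sim_step p q p' (a : Sigma) : bw_sim A p q -> trans A p' a p ->
  exists2 q', trans A q' a q & bw_sim A p' q'.
Proof.
move=> [s s_wins] p'_p.
pose s' h := s ((a, p') :: h).
pose cons_sg (sg : nat -> Sigma) n := if n is m.+1 then sg m else a.
pose cons_ps (ps : nat -> Q) n := if n is m.+1 then ps m else p.
have cons_play sg ps : ps 0 = p' -> (forall i, trans A (ps i.+1) (sg i) (ps i)) ->
    forall i, trans A (cons_ps ps i.+1) (cons_sg sg i) (cons_ps ps i).
  by move=> ps0 ps_trans [|i] //=; rewrite ps0.
have dup_cons sg ps : ps 0 = p' -> forall m,
    dup_positions q s (cons_sg sg) (cons_ps ps) m.+1 = dup_positions (s [:: (a, p')]) s' sg ps m.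
  by move=> ps0 [|m]; rewrite /dup_positions mkseqSl /= ps0.
have [sg [ps [ps0 ps_trans]]] := exists_bw_path a p'.
exists (s [:: (a, p')]).
  by have [] := s_wins _ _ erefl (cons_play sg ps ps0 ps_trans) 0; rewrite dup_cons.
exists s' => sg' ps' ps'0 ps'_trans i.
by have := s_wins _ _ erefl (cons_play sg' ps' ps'0 ps'_trans) i.+1; rewrite !dup_cons.
Qed.

End BackwardSimulation.

Lemma accepts_from_prune (Sigma Q : finType) (A : NFA Sigma Q) P p w :
  accepts_from (prune A P) p w -> accepts_from A p w.
Proof.
elim: w p => [|a w IHw] p //= [r [[p_r _] r_acc]].
by exists r; split=> //; apply: IHw.
Qed.

Section PruneBwSimFwIncl.
Variables (Sigma Q : finType) (A : NFA Sigma Q).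
Hypothesis A_bw_complete : bw_complete A.

Local Notation pruned := (prune A (P_rel A (bw_sim_strict A) (fw_incl A))).

(* [reach ur q]: some trace from I reading [rev ur] ends in q. *)
Fixpoint reach (ur : seq Sigma) (q : Q) : Prop :=
  match ur with
  | [::] => init A q
  | a :: ur' => exists p, reach ur' p /\ trans A p a q
  end.

Lemma reach_bw_sim (a : Sigma) ur p q : bw_sim A p q -> reach ur p -> reach ur q.
Proof.
elim: ur p q => [|b ur IHur] p q p_q /=; first exact: bw_sim_init.
case=> p' [p'_reach p'_p].
have [q' q'_q p'_q'] := bw_sim_step A_bw_complete p_q p'_p.
by exists q'; split=> //; apply: IHur p'_reach.
Qed.

Lemma pruned_accepts_from_bw_sim_above v ur p : reach ur p -> accepts_from A p v ->
  exists2 p', bw_sim A p p' & reach ur p' /\ accepts_from pruned p' v.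
Proof.
elim: v ur p => [|a v IHv] ur p p_reach p_acc.
  by exists p; [apply: bw_sim_refl | split].
pose M x := reach ur x /\ accepts_from A x (a :: v).
have [y [[y_reach [r [y_r r_acc]]] p_y] y_max] :=
  exists_maximal (@bw_sim_refl _ _ A) (@bw_sim_trans _ _ A) (conj p_reach p_acc : M p).
have [r' r_r' [r'_reach r'_acc]] := IHv (a :: ur) r (ex_intro _ y (conj y_reach y_r)) r_acc.
have [q q_r' y_q] := bw_sim_step A_bw_complete r_r' y_r.
have q_reach : reach ur q := reach_bw_sim a y_q y_reach.
have q_max z : M z -> bw_sim A q z -> bw_sim A z q.
  by move=> Mz q_z; apply: bw_sim_trans (y_max z Mz (bw_sim_trans y_q q_z)) y_q.
exists q; first exact: bw_sim_trans p_y y_q.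
split=> //; exists r'; split=> //; split=> //.
case=> -[[p' b] r''] /= [_ [_ p'_r'' b_a [q_p' p'_q] r'_r'']]; subst b.
apply/p'_q/q_max => //; split; first exact: (reach_bw_sim a q_p' q_reach).
by exists r''; split=> //; apply: r'_r''; apply: accepts_from_prune r'_acc.
Qed.

End PruneBwSimFwIncl.

Theorem theorem5p8 (Sigma Q : finType) (A : NFA Sigma Q) :
  fw_complete A -> bw_complete A ->
  forall w : seq Sigma,
    lang (prune A (P_rel A (bw_sim_strict A) (fw_incl A))) w <-> lang A w.
Proof.
move=> _ A_bw_complete w; split=> -[p [p_init p_acc]].
  by exists p; split=> //; apply: accepts_from_prune p_acc.
have [p' _ [p'_init p'_acc]] :=
  pruned_accepts_from_bw_sim_above A_bw_complete (ur := [::]) p_init p_acc.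
by exists p'.
Qed.
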